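(* Let $T$ be a bimonad on a monoidal category $\mathcal C$ and $Q$ a bimonad on the monoidal category $\mathcal C^T$. If $T$ and $Q$ are left (resp. right) Hopf monads, then the cross product $Q\ltimes T$ is a left (resp. right) Hopf monad on $\mathcal C$. In particular the cross product of two Hopf monads is a Hopf monad.
   Context: Monoidal categories are strict. A bimonad is a monad $(T,\mu,\eta)$ with a comonoidal structure $T_2(X,Y)\colon T(X\otimes Y)\to TX\otimes TY$, $T_0\colon T\mathbb 1\to\mathbb 1$ such that $\mu,\eta$ are comonoidal. $\mathcal C^T$ is the category of $T$-modules, monoidal with $(M,r)\otimes(N,s)=(M\otimes N,(r\otimes s)T_2(M,N))$, unit $(\mathbb 1,T_0)$; $(F_T,U_T)$ is the free/forgetful adjunction, a comonoidal adjunction. The cross product $Q\ltimes T$ is the bimonad on $\mathcal C$ of the composite comonoidal adjunction $(F_QF_T\colon\mathcal C\to(\mathcal C^T)^Q,\;U_TU_Q)$: as a functor $Q\ltimes T=U_TQF_T$, with product $q_{F_T}Q(\varepsilon_{QF_T})$ and unit $v_{F_T}\eta$ ($q,v$ the product and unit of $Q$, $\varepsilon$ the counit of $(F_T,U_T)$), and comonoidal structure $(Q\ltimes T)_2(X,Y)=Q_2(F_TX,F_TY)\,Q((F_T)_2(X,Y))$, $(Q\ltimes T)_0=Q_0Q((F_T)_0)$. $T$ is a left (resp. right) Hopf monad if $H^l_{X,Y}=(TX\otimes\mu_Y)T_2(X,TY)$ (resp. $H^r_{X,Y}=(\mu_X\otimes TY)T_2(TX,Y)$) is invertible for all $X,Y$;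 Hopf if both. *)

From Stdlib Require Import ProofIrrelevance.
From mathcomp Require Import ssreflect ssrfun.
Set Implicit Arguments. Unset Strict Implicit. Unset Printing Implicit Defensive.

Record MonCat := MonCatMk {
  ob : Type;
  hom : ob -> ob -> Type;
  idm : forall X, hom X X;
  comp : forall X Y Z, hom Y Z -> hom X Y -> hom X Z;
  tens : ob -> ob -> ob;
  tensm : forall X X' Y Y', hom X X' -> hom Y Y' -> hom (tens X Y) (tens X' Y');
  munit : ob;
  assoc_ob : forall X Y Z, tens (tens X Y) Z = tens X (tens Y Z);
  lunit_ob : forall X, tens munit X = X;
  runit_ob : forall X, tens X munit = X }.

Arguments hom {m} _ _ : rename.
Arguments idm {m} X : rename.
Arguments comp {m X Y Z} _ _ : rename.
Arguments tens {m} _ _ : rename.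
Arguments tensm {m X X' Y Y'} _ _ : rename.
Arguments munit {m} : rename.
Arguments assoc_ob {m} X Y Z : rename.
Arguments lunit_ob {m} X : rename.
Arguments runit_ob {m} X : rename.

Notation "g \oo f" := (comp g f) (at level 40, left associativity).
Notation "f \ox g" := (tensm f g) (at level 35).

Definition idto (C : MonCat) (X Y : ob C) (e : X = Y) : hom X Y :=
  match e in _ = Z return hom X Z with eq_refl => idm X end.
Arguments idto {C X Y} e.

(* Axioms of a strict monoidal category: category laws, bifunctoriality of
   the tensor, and strictness of the associativity/unit constraints on
   morphisms (the structural isomorphisms are identities). *)
Record StrictMonoidal (C : MonCat) : Prop := {
  comp_idl : forall (X Y : ob C) (f : hom X Y), idm Y \oo f = f;
  comp_idr : forall (X Y : ob C) (f : hom X Y), f \oo idm X = f;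
  catA : forall (X Y Z W : ob C) (f : hom X Y) (g : hom Y Z) (h : hom Z W),
      h \oo (g \oo f) = (h \oo g) \oo f;
  tens_id : forall X Y : ob C, idm X \ox idm Y = idm (tens X Y);
  tens_comp : forall (X X' X'' Y Y' Y'' : ob C) (f : hom X X') (f' : hom X' X'')
      (g : hom Y Y') (g' : hom Y' Y''),
      (f' \oo f) \ox (g' \oo g) = (f' \ox g') \oo (f \ox g);
  assoc_nat : forall (X X' Y Y' Z Z' : ob C) (f : hom X X') (g : hom Y Y') (h : hom Z Z'),
      idto (assoc_ob X' Y' Z') \oo ((f \ox g) \ox h)
      = (f \ox (g \ox h)) \oo idto (assoc_ob X Y Z);
  lunit_nat : forall (X Y : ob C) (f : hom X Y),
      idto (lunit_ob Y) \oo (idm munit \ox f) = f \oo idto (lunit_ob X);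
  runit_nat : forall (X Y : ob C) (f : hom X Y),
      idto (runit_ob Y) \oo (f \ox idm munit) = f \oo idto (runit_ob X) }.

Record BimonadData (C : MonCat) := BimonadMk {
  fob : ob C -> ob C;
  fmap : forall X Y : ob C, hom X Y -> hom (fob X) (fob Y);
  mu : forall X, hom (fob (fob X)) (fob X);
  eta : forall X, hom X (fob X);
  cm2 : forall X Y, hom (fob (tens X Y)) (tens (fob X) (fob Y));
  cm0 : hom (fob munit) munit }.

Arguments fob {C} _ _.
Arguments fmap {C} _ {X Y} _.
Arguments mu {C} _ _.
Arguments eta {C} _ _.
Arguments cm2 {C} _ _ _.
Arguments cm0 {C} _.

Record IsBimonad (C : MonCat) (T : BimonadData C) : Prop := {
  fmap_id : forall X : ob C, fmap T (idm X) = idm (fob T X);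
  fmap_comp : forall (X Y Z : ob C) (f : hom X Y) (g : hom Y Z),
      fmap T (g \oo f) = fmap T g \oo fmap T f;
  mu_nat : forall (X Y : ob C) (f : hom X Y),
      mu T Y \oo fmap T (fmap T f) = fmap T f \oo mu T X;
  eta_nat : forall (X Y : ob C) (f : hom X Y), eta T Y \oo f = fmap T f \oo eta T X;
  mu_assoc : forall X : ob C, mu T X \oo fmap T (mu T X) = mu T X \oo mu T (fob T X);
  mu_eta_l : forall X : ob C, mu T X \oo eta T (fob T X) = idm (fob T X);
  mu_eta_r : forall X : ob C, mu T X \oo fmap T (eta T X) = idm (fob T X);
  cm2_nat : forall (X X' Y Y' : ob C) (f : hom X X') (g : hom Y Y'),
      cm2 T X' Y' \oo fmap T (f \ox g) = (fmap T f \ox fmap T g) \oo cm2 T X Y;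
  cm2_coassoc : forall X Y Z : ob C,
      idto (assoc_ob (fob T X) (fob T Y) (fob T Z))
        \oo ((cm2 T X Y \ox idm (fob T Z)) \oo cm2 T (tens X Y) Z)
      = (idm (fob T X) \ox cm2 T Y Z) \oo cm2 T X (tens Y Z)
        \oo fmap T (idto (assoc_ob X Y Z));
  cm_lunit : forall X : ob C,
      idto (lunit_ob (fob T X)) \oo ((cm0 T \ox idm (fob T X)) \oo cm2 T munit X)
      = fmap T (idto (lunit_ob X));
  cm_runit : forall X : ob C,
      idto (runit_ob (fob T X)) \oo ((idm (fob T X) \ox cm0 T) \oo cm2 T X munit)
      = fmap T (idto (runit_ob X));
  mu_cm2 : forall X Y : ob C,
      cm2 T X Y \oo mu T (tens X Y)
      = (mu T X \ox mu T Y) \oo (cm2 T (fob T X) (fob T Y) \oo fmap T (cm2 T X Y));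
  mu_cm0 : cm0 T \oo mu T munit = cm0 T \oo fmap T (cm0 T);
  eta_cm2 : forall X Y : ob C, cm2 T X Y \oo eta T (tens X Y) = eta T X \ox eta T Y;
  eta_cm0 : cm0 T \oo eta T munit = idm munit }.

Definition is_iso (C : MonCat) (X Y : ob C) (f : hom X Y) : Prop :=
  exists g : hom Y X, g \oo f = idm X /\ f \oo g = idm Y.

Definition fusion_l (C : MonCat) (T : BimonadData C) (X Y : ob C) :=
  (idm (fob T X) \ox mu T Y) \oo cm2 T X (fob T Y).
Definition fusion_r (C : MonCat) (T : BimonadData C) (X Y : ob C) :=
  (mu T X \ox idm (fob T Y)) \oo cm2 T (fob T X) Y.

Definition left_Hopf (C : MonCat) (T : BimonadData C) : Prop :=
  forall X Y : ob C, is_iso (fusion_l T X Y).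
Definition right_Hopf (C : MonCat) (T : BimonadData C) : Prop :=
  forall X Y : ob C, is_iso (fusion_r T X Y).
Definition Hopf (C : MonCat) (T : BimonadData C) : Prop := left_Hopf T /\ right_Hopf T.
Section Modules.
Variables (C : MonCat) (HC : StrictMonoidal C) (T : BimonadData C) (HT : IsBimonad T).

Record Mod := ModMk {
  car : ob C;
  act : hom (fob T car) car;
  act_assoc : act \oo fmap T act = act \oo mu T car;
  act_unit : act \oo eta T car = idm car }.

Definition mhom (M N : Mod) : Type :=
  { f : hom (car M) (car N) | act N \oo fmap T f = f \oo act M }.

Lemma mid_proof (M : Mod) : act M \oo fmap T (idm (car M)) = idm (car M) \oo act M.
Proof. by rewrite (fmap_id HT) (comp_idl HC) (comp_idr HC). Qed.

Definition mid (M : Mod) : mhom M M := exist _ (idm (car M)) (mid_proof M).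

Lemma mcomp_proof (M N P : Mod) (g : mhom N P) (f : mhom M N) :
  act P \oo fmap T (proj1_sig g \oo proj1_sig f) = (proj1_sig g \oo proj1_sig f) \oo act M.
Proof.
case: g f => g Hg [f Hf] /=.
by rewrite (fmap_comp HT) (catA HC) Hg -(catA HC) Hf (catA HC).
Qed.

Definition mcomp (M N P : Mod) (g : mhom N P) (f : mhom M N) : mhom M P :=
  exist _ (proj1_sig g \oo proj1_sig f) (mcomp_proof g f).

Section Tens.
Variables M N : Mod.
Let a := act M.
Let b := act N.

Lemma mtens_assoc :
  ((a \ox b) \oo cm2 T (car M) (car N)) \oo fmap T ((a \ox b) \oo cm2 T (car M) (car N))
  = ((a \ox b) \oo cm2 T (car M) (car N)) \oo mu T (tens (car M) (car N)).
Proof.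
rewrite -!(catA HC) (mu_cm2 HT) (fmap_comp HT) !(catA HC).
rewrite -[_ \oo cm2 T _ _ \oo fmap T (a \ox b)](catA HC) (cm2_nat HT).
rewrite (catA HC) -(tens_comp HC) /a /b !act_assoc (tens_comp HC).
by rewrite -!(catA HC).
Qed.

Lemma mtens_unit :
  ((a \ox b) \oo cm2 T (car M) (car N)) \oo eta T (tens (car M) (car N))
  = idm (tens (car M) (car N)).
Proof.
by rewrite -(catA HC) (eta_cm2 HT) -(tens_comp HC) /a /b !act_unit (tens_id HC).
Qed.

Definition mtens : Mod := ModMk mtens_assoc mtens_unit.
End Tens.

Lemma mtensm_proof (M M' N N' : Mod) (f : mhom M M') (g : mhom N N') :
  act (mtens M' N') \oo fmap T (proj1_sig f \ox proj1_sig g)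
  = (proj1_sig f \ox proj1_sig g) \oo act (mtens M N).
Proof.
case: f g => f Hf [g Hg] /=.
rewrite -(catA HC) (cm2_nat HT) (catA HC) -(tens_comp HC) Hf Hg.
by rewrite (tens_comp HC) (catA HC).
Qed.

Definition mtensm (M M' N N' : Mod) (f : mhom M M') (g : mhom N N')
  : mhom (mtens M N) (mtens M' N') :=
  exist _ (proj1_sig f \ox proj1_sig g) (mtensm_proof f g).

Lemma munit_assoc : cm0 T \oo fmap T (cm0 T) = cm0 T \oo mu T munit.
Proof. by rewrite (mu_cm0 HT). Qed.

Definition munitM : Mod := ModMk munit_assoc (eta_cm0 HT).

Lemma mod_eq (M N : Mod) (e : car M = car N) :
  idto e \oo act M = act N \oo fmap T (idto e) -> M = N.
Proof.
case: M e => X r r1 r2; case: N => Y s s1 s2 /= e; case: Y / e s s1 s2 => s s1 s2 /=.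
rewrite (fmap_id HT) (comp_idl HC) (comp_idr HC) => E.
case: s / E s1 s2 => s1 s2.
by rewrite (proof_irrelevance _ r1 s1) (proof_irrelevance _ r2 s2).
Qed.

Lemma massoc (M N P : Mod) : mtens (mtens M N) P = mtens M (mtens N P).
Proof.
apply: (@mod_eq (mtens (mtens M N) P) (mtens M (mtens N P)) (assoc_ob (car M) (car N) (car P))) => /=.
rewrite -[act P](comp_idr HC) (tens_comp HC) (comp_idr HC).
rewrite !(catA HC) (assoc_nat HC).
rewrite -!(catA HC) (cm2_coassoc HT).
rewrite !(catA HC) -(tens_comp HC) (comp_idr HC).
by [].
Qed.

Lemma mlunit (M : Mod) : mtens munitM M = M.
Proof.
apply: (@mod_eq (mtens munitM M) M (lunit_ob (car M))) => /=.
rewrite -[cm0 T](comp_idl HC) -[act M](comp_idr HC) (tens_comp HC).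
rewrite !(catA HC) (lunit_nat HC) -!(catA HC) (cm_lunit HT).
by rewrite (comp_idl HC).
Qed.

Lemma mrunit (M : Mod) : mtens M munitM = M.
Proof.
apply: (@mod_eq (mtens M munitM) M (runit_ob (car M))) => /=.
rewrite -[cm0 T](comp_idl HC) -[act M](comp_idr HC) (tens_comp HC).
rewrite !(catA HC) (runit_nat HC) -!(catA HC) (cm_runit HT).
by rewrite (comp_idl HC).
Qed.

End Modules.

Definition ModCat (C : MonCat) (HC : StrictMonoidal C) (T : BimonadData C)
  (HT : IsBimonad T) : MonCat :=
  @MonCatMk (Mod T) (@mhom C T) (@mid C HC T HT) (@mcomp C HC T HT)
    (@mtens C HC T HT) (@mtensm C HC T HT) (@munitM C T HT)
    (@massoc C HC T HT) (@mlunit C HC T HT) (@mrunit C HC T HT).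

Section Cross.
Variables (C : MonCat) (HC : StrictMonoidal C) (T : BimonadData C) (HT : IsBimonad T).
Let CT := ModCat HC HT.

Definition FT (X : ob C) : Mod T := ModMk (mu_assoc HT X) (mu_eta_l HT X).
Definition FTm (X Y : ob C) (f : hom X Y) : mhom (FT X) (FT Y) :=
  exist _ (fmap T f) (mu_nat HT f).
(* counit of (F_T, U_T) at a module (M, r): r : F_T M -> (M, r) *)
Definition epsM (M : Mod T) : mhom (FT (car M)) M := exist _ (act M) (act_assoc M).

Lemma FT2_proof (X Y : ob C) :
  act (mtens HC HT (FT X) (FT Y)) \oo fmap T (cm2 T X Y) = cm2 T X Y \oo act (FT (tens X Y)).
Proof. by rewrite /= (mu_cm2 HT) (catA HC). Qed.

Definition FT2 (X Y : ob C) : mhom (FT (tens X Y)) (mtens HC HT (FT X) (FT Y)) :=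
  exist _ (cm2 T X Y) (FT2_proof X Y).
Definition FT0 : mhom (FT munit) (munitM HT) := exist _ (cm0 T) (esym (mu_cm0 HT)).

(* the cross product Q ⋉ T = U_T Q F_T *)
Definition cross (Q : BimonadData CT) : BimonadData C :=
  @BimonadMk C
    (fun X => car (fob Q (FT X)))
    (fun X Y f => proj1_sig (fmap Q (FTm f)))
    (fun X => proj1_sig (mu Q (FT X)) \oo proj1_sig (fmap Q (epsM (fob Q (FT X)))))
    (fun X => proj1_sig (eta Q (FT X)) \oo eta T X)
    (fun X Y => proj1_sig (cm2 Q (FT X) (FT Y)) \oo proj1_sig (fmap Q (FT2 X Y)))
    (proj1_sig (cm0 Q) \oo proj1_sig (fmap Q FT0)).
End Cross.

(* The Hopf operators of a composite of comonoidal adjunctions factor through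
   those of the factors.  For Q ⋉ T = U_T Q F_T this reads
     H^l_{Q⋉T}(X, Y) = U_T (H^l_Q(F_T X, F_T Y) ∘ Q(H^l_{F_T}(X, Q F_T Y))),
   where H^l_{F_T}(X, M) = (F_T X ⊗ ε_M) (F_T)_2(X, U_T M) has underlying morphism
   (TX ⊗ r) T_2(X, M) for a module (M, r).  The latter is invertible when T is left
   Hopf, with inverse T(X ⊗ r) ∘ (H^l_{X,M})^{-1} ∘ (TX ⊗ η_M), by naturality of the
   inverse fusion operator.  Mirror argument on the right. *)
From Stdlib Require Import ProofIrrelevance.
From mathcomp Require Import ssreflect ssrfun.
Set Implicit Arguments. Unset Strict Implicit. Unset Printing Implicit Defensive.

Section Category.
Variables (C : MonCat) (HC : StrictMonoidal C).

Lemma is_iso_comp (A B D : ob C) (f : hom A B) (g : hom B D) :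
  is_iso f -> is_iso g -> is_iso (g \oo f).
Proof.
move=> [f' [f'f ff']] [g' [g'g gg']]; exists (f' \oo g'); split.
- by rewrite (catA HC) -[f' \oo g' \oo g](catA HC) g'g (comp_idr HC).
- by rewrite (catA HC) -[g \oo f \oo f'](catA HC) ff' (comp_idr HC).
Qed.

Lemma iso_inv_square (A B A' B' : ob C) (f : hom A B) (f' : hom B A)
    (g : hom A' B') (g' : hom B' A') (a : hom A' A) (b : hom B' B) :
  f' \oo f = idm A -> g \oo g' = idm B' -> f \oo a = b \oo g -> a \oo g' = f' \oo b.
Proof.
move=> f'f gg' fa_bg.
by rewrite -[a](comp_idl HC) -f'f -(catA HC a f) fa_bg -!(catA HC) gg' (comp_idr HC).
Qed.

Lemma tensm_idl_comp (A X Y Z : ob C) (f : hom X Y) (g : hom Y Z) :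
  (idm A \ox g) \oo (idm A \ox f) = idm A \ox (g \oo f).
Proof. by rewrite -(tens_comp HC) (comp_idl HC). Qed.

Lemma tensm_idr_comp (A X Y Z : ob C) (f : hom X Y) (g : hom Y Z) :
  (g \ox idm A) \oo (f \ox idm A) = (g \oo f) \ox idm A.
Proof. by rewrite -(tens_comp HC) (comp_idl HC). Qed.

End Category.

Lemma fmap_is_iso (C : MonCat) (T : BimonadData C) (HT : IsBimonad T)
    (A B : ob C) (f : hom A B) :
  is_iso f -> is_iso (fmap T f).
Proof.
move=> [g [gf fg]]; exists (fmap T g).
by rewrite -!(fmap_comp HT) gf fg !(fmap_id HT).
Qed.

Section FusionOperators.
Variables (C : MonCat) (HC : StrictMonoidal C) (T : BimonadData C) (HT : IsBimonad T).

Definition fusion_l_by (X Y Z : ob C) (g : hom (fob T Y) Z) :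
    hom (fob T (tens X Y)) (tens (fob T X) Z) :=
  (idm (fob T X) \ox g) \oo cm2 T X Y.

Definition fusion_r_by (X Y Z : ob C) (g : hom (fob T X) Z) :
    hom (fob T (tens X Y)) (tens Z (fob T Y)) :=
  (g \ox idm (fob T Y)) \oo cm2 T X Y.

Lemma fusion_l_by_fmap (X Y Y' Z : ob C) (f : hom Y Y') (g : hom (fob T Y') Z) :
  fusion_l_by X g \oo fmap T (idm X \ox f) = fusion_l_by X (g \oo fmap T f).
Proof.
rewrite /fusion_l_by -(catA HC) (cm2_nat HT) (fmap_id HT) (catA HC).
by rewrite (tensm_idl_comp HC).
Qed.

Lemma fusion_r_by_fmap (X X' Y Z : ob C) (f : hom X X') (g : hom (fob T X') Z) :
  fusion_r_by Y g \oo fmap T (f \ox idm Y) = fusion_r_by Y (g \oo fmap T f).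
Proof.
rewrite /fusion_r_by -(catA HC) (cm2_nat HT) (fmap_id HT) (catA HC).
by rewrite (tensm_idr_comp HC).
Qed.

Lemma fusion_l_by_comp (X Y Z Z' : ob C) (g : hom (fob T Y) Z) (h : hom Z Z') :
  (idm (fob T X) \ox h) \oo fusion_l_by X g = fusion_l_by X (h \oo g).
Proof. by rewrite /fusion_l_by (catA HC) (tensm_idl_comp HC). Qed.

Lemma fusion_r_by_comp (X Y Z Z' : ob C) (g : hom (fob T X) Z) (h : hom Z Z') :
  (h \ox idm (fob T Y)) \oo fusion_r_by Y g = fusion_r_by Y (h \oo g).
Proof. by rewrite /fusion_r_by (catA HC) (tensm_idr_comp HC). Qed.

Lemma fusion_l_by_id (X Y : ob C) : fusion_l_by X (idm (fob T Y)) = cm2 T X Y.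
Proof. by rewrite /fusion_l_by (tens_id HC) (comp_idl HC). Qed.

Lemma fusion_r_by_id (X Y : ob C) : fusion_r_by Y (idm (fob T X)) = cm2 T X Y.
Proof. by rewrite /fusion_r_by (tens_id HC) (comp_idl HC). Qed.

Lemma fusion_lE (X Y : ob C) : fusion_l T X Y = fusion_l_by X (mu T Y).
Proof. by []. Qed.

Lemma fusion_rE (X Y : ob C) : fusion_r T X Y = fusion_r_by Y (mu T X).
Proof. by []. Qed.

Lemma fusion_l_by_act_iso (X : ob C) (M : Mod T) :
  left_Hopf T -> is_iso (fusion_l_by X (act M)).
Proof.
move=> hopfT; set r := act M.
have [Hi [HiH HHi]] := hopfT X (car M).
have [Ki [_ KKi]] := hopfT X (fob T (car M)).
rewrite !fusion_lE in HiH HHi KKi.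
have Hi_Tr : fmap T (idm X \ox fmap T r) \oo Ki = Hi \oo (idm _ \ox fmap T r).
  apply: (iso_inv_square HC HiH KKi).
  by rewrite fusion_l_by_fmap (mu_nat HT) -fusion_l_by_comp.
have Hi_mu : fmap T (idm X \ox mu T (car M)) \oo Ki = Hi \oo (idm _ \ox mu T (car M)).
  apply: (iso_inv_square HC HiH KKi).
  by rewrite fusion_l_by_fmap (mu_assoc HT) -fusion_l_by_comp.
have Hi_cm2 : Hi \oo cm2 T X (car M) = fmap T (idm X \ox eta T (car M)).
  rewrite -fusion_l_by_id -(mu_eta_r HT) -fusion_l_by_fmap.
  by rewrite (catA HC) HiH (comp_idl HC).
exists (fmap T (idm X \ox r) \oo Hi \oo (idm _ \ox eta T (car M))); split.
- rewrite -!(catA HC) fusion_l_by_comp (eta_nat HT) -fusion_l_by_comp.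
  rewrite [Hi \oo _](catA HC) -Hi_Tr -!(catA HC) [fmap T _ \oo (fmap T _ \oo _)](catA HC).
  rewrite -(fmap_comp HT) (tensm_idl_comp HC) (act_assoc M) -(tensm_idl_comp HC) (fmap_comp HT).
  rewrite -!(catA HC) [fmap T _ \oo (Ki \oo _)](catA HC) Hi_mu -(catA HC) fusion_l_by_comp.
  rewrite (mu_eta_l HT) fusion_l_by_id Hi_cm2 -(fmap_comp HT) (tensm_idl_comp HC).
  by rewrite (act_unit M) (tens_id HC) (fmap_id HT).
- rewrite !(catA HC) fusion_l_by_fmap (act_assoc M) -fusion_l_by_comp.
  rewrite -[_ \oo fusion_l T X _ \oo Hi](catA HC) HHi (comp_idr HC).
  by rewrite (tensm_idl_comp HC) (act_unit M) (tens_id HC).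
Qed.

Lemma fusion_r_by_act_iso (M : Mod T) (Y : ob C) :
  right_Hopf T -> is_iso (fusion_r_by Y (act M)).
Proof.
move=> hopfT; set r := act M.
have [Hi [HiH HHi]] := hopfT (car M) Y.
have [Ki [_ KKi]] := hopfT (fob T (car M)) Y.
rewrite !fusion_rE in HiH HHi KKi.
have Hi_Tr : fmap T (fmap T r \ox idm Y) \oo Ki = Hi \oo (fmap T r \ox idm _).
  apply: (iso_inv_square HC HiH KKi).
  by rewrite fusion_r_by_fmap (mu_nat HT) -fusion_r_by_comp.
have Hi_mu : fmap T (mu T (car M) \ox idm Y) \oo Ki = Hi \oo (mu T (car M) \ox idm _).
  apply: (iso_inv_square HC HiH KKi).
  by rewrite fusion_r_by_fmap (mu_assoc HT) -fusion_r_by_comp.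
have Hi_cm2 : Hi \oo cm2 T (car M) Y = fmap T (eta T (car M) \ox idm Y).
  rewrite -fusion_r_by_id -(mu_eta_r HT) -fusion_r_by_fmap.
  by rewrite (catA HC) HiH (comp_idl HC).
exists (fmap T (r \ox idm Y) \oo Hi \oo (eta T (car M) \ox idm _)); split.
- rewrite -!(catA HC) fusion_r_by_comp (eta_nat HT) -fusion_r_by_comp.
  rewrite [Hi \oo _](catA HC) -Hi_Tr -!(catA HC) [fmap T _ \oo (fmap T _ \oo _)](catA HC).
  rewrite -(fmap_comp HT) (tensm_idr_comp HC) (act_assoc M) -(tensm_idr_comp HC) (fmap_comp HT).
  rewrite -!(catA HC) [fmap T _ \oo (Ki \oo _)](catA HC) Hi_mu -(catA HC) fusion_r_by_comp.
  rewrite (mu_eta_l HT) fusion_r_by_id Hi_cm2 -(fmap_comp HT) (tensm_idr_comp HC).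
  by rewrite (act_unit M) (tens_id HC) (fmap_id HT).
- rewrite !(catA HC) fusion_r_by_fmap (act_assoc M) -fusion_r_by_comp.
  rewrite -[_ \oo fusion_r T _ Y \oo Hi](catA HC) HHi (comp_idr HC).
  by rewrite (tensm_idr_comp HC) (act_unit M) (tens_id HC).
Qed.
End FusionOperators.

Section ModuleCategory.
Variables (C : MonCat) (HC : StrictMonoidal C) (T : BimonadData C) (HT : IsBimonad T).
Local Notation CT := (ModCat HC HT).

Lemma mhom_eq (M N : Mod T) (f g : mhom M N) : proj1_sig f = proj1_sig g -> f = g.
Proof.
case: f g => f Hf [g Hg] /= fg; case: g / fg Hg => Hg.
by rewrite (proof_irrelevance _ Hf Hg).
Qed.

Lemma proj1_idto (M N : ob CT) (e : M = N) (e' : car M = car N) :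
  proj1_sig (idto e) = idto e'.
Proof. by case: N / e e' => e'; rewrite (proof_irrelevance _ e' erefl). Qed.

Lemma ModCat_strict : StrictMonoidal CT.
Proof.
split.
- by move=> *; apply: mhom_eq; apply: comp_idl.
- by move=> *; apply: mhom_eq; apply: comp_idr.
- by move=> *; apply: mhom_eq; apply: catA.
- by move=> *; apply: mhom_eq; apply: tens_id.
- by move=> *; apply: mhom_eq; apply: tens_comp.
- move=> M M' N N' P P' f g h; apply: mhom_eq => /=.
  rewrite (proj1_idto (assoc_ob M' N' P') (assoc_ob (car M') (car N') (car P'))).
  by rewrite (proj1_idto (assoc_ob M N P) (assoc_ob (car M) (car N) (car P))) (assoc_nat HC).
- move=> M N f; apply: mhom_eq => /=.
  by rewrite (proj1_idto (lunit_ob N) (lunit_ob (car N)))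
    (proj1_idto (lunit_ob M) (lunit_ob (car M))) (lunit_nat HC).
- move=> M N f; apply: mhom_eq => /=.
  by rewrite (proj1_idto (runit_ob N) (runit_ob (car N)))
    (proj1_idto (runit_ob M) (runit_ob (car M))) (runit_nat HC).
Qed.

Lemma is_iso_proj1 (M N : Mod T) (f : @hom CT M N) : is_iso f -> is_iso (proj1_sig f).
Proof.
move=> [g [gf fg]]; exists (proj1_sig g).
by split; [exact: (f_equal (@proj1_sig _ _) gf) | exact: (f_equal (@proj1_sig _ _) fg)].
Qed.

Lemma is_iso_mhom (M N : Mod T) (f : @hom CT M N) : is_iso (proj1_sig f) -> is_iso f.
Proof.
case: f => f Hf /= [g [gf fg]].
have Hg : act M \oo fmap T g = g \oo act N.
  apply: (iso_inv_square HC gf _ (esym Hf)).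
  by rewrite -(fmap_comp HT) fg (fmap_id HT).
by exists (exist _ g Hg : @hom CT N M); split; apply: mhom_eq.
Qed.
End ModuleCategory.

Section CrossProduct.
Variables (C : MonCat) (HC : StrictMonoidal C) (T : BimonadData C) (HT : IsBimonad T).
Local Notation CT := (ModCat HC HT).
Local Notation HCT := (ModCat_strict HC HT).
Variables (Q : BimonadData CT) (HQ : IsBimonad Q).

Definition FT_hopf_l (X : ob C) (M : Mod T) :
    @hom CT (FT HT (tens X (car M))) (mtens HC HT (FT HT X) M) :=
  (idm (FT HT X : ob CT) \ox epsM HT M) \oo FT2 HC HT X (car M).

Definition FT_hopf_r (M : Mod T) (Y : ob C) :
    @hom CT (FT HT (tens (car M) Y)) (mtens HC HT M (FT HT Y)) :=
  @tensm CT _ _ _ _ (epsM HT M) (idm (FT HT Y : ob CT)) \oo FT2 HC HT (car M) Y.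

Lemma FT_hopf_l_iso (X : ob C) (M : Mod T) : left_Hopf T -> is_iso (FT_hopf_l X M).
Proof. by move=> hopfT; apply: is_iso_mhom; apply: fusion_l_by_act_iso. Qed.

Lemma FT_hopf_r_iso (M : Mod T) (Y : ob C) : right_Hopf T -> is_iso (FT_hopf_r M Y).
Proof. by move=> hopfT; apply: is_iso_mhom; apply: fusion_r_by_act_iso. Qed.

Lemma cross_fusion_l (X Y : ob C) :
  fusion_l (cross Q) X Y
  = proj1_sig (fusion_l Q (FT HT X) (FT HT Y) \oo fmap Q (FT_hopf_l X (fob Q (FT HT Y)))).
Proof.
rewrite (fmap_comp HQ) (catA HCT) fusion_lE (fusion_l_by_fmap HCT HQ).
exact: catA.
Qed.

Lemma cross_fusion_r (X Y : ob C) :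
  fusion_r (cross Q) X Y
  = proj1_sig (fusion_r Q (FT HT X) (FT HT Y) \oo fmap Q (FT_hopf_r (fob Q (FT HT X)) Y)).
Proof.
rewrite (fmap_comp HQ) (catA HCT) fusion_rE (fusion_r_by_fmap HCT HQ).
exact: catA.
Qed.

Lemma cross_left_Hopf : left_Hopf T -> left_Hopf Q -> left_Hopf (cross Q).
Proof.
move=> hopfT hopfQ X Y; rewrite cross_fusion_l.
exact: (is_iso_proj1 (is_iso_comp HCT (fmap_is_iso HQ (FT_hopf_l_iso _ _ hopfT)) (hopfQ _ _))).
Qed.

Lemma cross_right_Hopf : right_Hopf T -> right_Hopf Q -> right_Hopf (cross Q).
Proof.
move=> hopfT hopfQ X Y; rewrite cross_fusion_r.
exact: (is_iso_proj1 (is_iso_comp HCT (fmap_is_iso HQ (FT_hopf_r_iso _ _ hopfT)) (hopfQ _ _))).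
Qed.
End CrossProduct.

Theorem mainTheorem10 (C : MonCat) (HC : StrictMonoidal C)
  (T : BimonadData C) (HT : IsBimonad T)
  (Q : BimonadData (ModCat HC HT)) (HQ : IsBimonad Q) :
  (left_Hopf T -> left_Hopf Q -> left_Hopf (cross Q)) /\
  (right_Hopf T -> right_Hopf Q -> right_Hopf (cross Q)) /\
  (Hopf T -> Hopf Q -> Hopf (cross Q)).
Proof.
have hopf_l := @cross_left_Hopf C HC T HT Q HQ.
have hopf_r := @cross_right_Hopf C HC T HT Q HQ.
split=> [//|]; split=> [//|].
by move=> [lT rT] [lQ rQ]; split; [apply: hopf_l | apply: hopf_r].
Qed.
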